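(* Let $T\in\mathcal A$ and let $\mathbb Q=\mathbb Q(T)$. There is a family $\mathcal F$ of $\aleph_1$ many dense subsets of $\mathbb Q$ such that for every filter $G\subseteq\mathbb Q$ meeting every member of $\mathcal F$, letting $T^\ast=\bigcup\{<_p:p\in G\}$ (a tree order on $\bigcup\{u^p:p\in G\}$) and $c=\bigcup\{c^p:p\in G\}$, we have $(T^\ast,T,c)\in\mathcal A_2^{\rm sp}$.
   Context: For an ordinal $\gamma<\omega_1$, ${\rm ht}(\gamma)$ is the unique $\alpha$ with $\gamma\in[\omega\alpha,\omega\alpha+\omega)$; ${\rm ht}(\langle\rangle)=-1$. $\mathcal A$ denotes the set of all trees $T$ whose underlying set is $\{\langle\rangle\}\cup X$ for some $X\subseteq\omega_1$, where $\langle\rangle$ is the root, such that $T$ has height $\omega_1$, no uncountable branch, is normal (two distinct elements of the same limit level have different sets of predecessors), and ${\rm lev}_\alpha(T)\subseteq[\omega\alpha,\omega\alpha+\omega)$ for all $\alpha<\omega_1$. $x\cap_T y$ denotes the meet, $x\perp_T y$ incomparability, and for $(x,y)$ with both of level $\alpha$, $\alpha(x,y)=\alpha$. $\mathcal A_2^{\rm sp}$ is the set of triples $(T_1,T_2,c)$ with $T_1,T_2\in\mathcal A$ and $c:\bigcup_{\delta<\omega_1\text{ limit}}{\rm lev}_\delta(T_1)\times{\rm lev}_\delta(T_2)\to\omega$ such that $c(x_1,y_1)=c(x_2,y_2)$ with $(x_1,y_1)\ne(x_2,y_2)$ implies $\alpha(x_1,y_1)\ne\alpha(x_2,y_2)$,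 $x_1\perp_{T_1}x_2$, $y_1\perp_{T_2}y_2$ and ${\rm ht}(x_1\cap_{T_1}x_2)>{\rm ht}(y_1\cap_{T_2}y_2)$. The forcing $\mathbb Q(T)$ for $T\in\mathcal A$ consists of all $p=(u^p,v^p,<_p,c^p)$ such that: (1) $u^p\subseteq\omega_1\cup\{\langle\rangle\}$ and $v^p\subseteq T$ are finite and contain $\langle\rangle$; (2) for every $\alpha\in v^p$ there is $\beta\in u^p$ with ${\rm ht}(\alpha)={\rm ht}(\beta)$; (3) $<_p$ is a tree order on $u^p$ with root $\langle\rangle$, such that $\alpha<_p\beta$ implies ${\rm ht}(\alpha)<{\rm ht}(\beta)$ and any two distinct elements $\alpha,\beta\in u^p$ have a meet $\alpha\cap_{<_p}\beta\in u^p$; (4) $c^p$ is a function from $\bigcup_{\delta<\omega_1\text{ limit}}{\rm lev}_\delta(u^p)\times{\rm lev}_\delta(v^p)$ to $\omega$ (levels of $u^p$ meaning elements of height $\delta$, levels of $v^p$ meaning levels in $T$) such that if $c^p(x_1,y_1)=c^p(x_2,y_2)$ and $(x_1,y_1)\ne(x_2,y_2)$ then $\alpha(x_1,y_1)\ne\alpha(x_2,y_2)$, $x_1\perp_{<_p}x_2$, $y_1\perp_T y_2$ and ${\rm ht}(x_1\cap_{<_p}x_2)>{\rm ht}(y_1\cap_T y_2)$. The order: $p\le q$ iff $u^p\subseteq u^q$, $v^p\subseteq v^q$, $<_p\subseteq<_q$, $c^p\subseteq c^q$, and the meets (and root) computed in $<_p$ remain the meets (and root) in $<_q$. *)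

From Stdlib Require Import List.
Import ListNotations.
Set Implicit Arguments.

(* Encoding conventions:
   - omega_1 is an arbitrary type W with a strict order lt satisfying
     [is_omega1] (a well-order, uncountable, all proper initial segments
     countable); any such (W,lt) is isomorphic to omega_1.
   - The countable ordinal gamma = omega*alpha + n is coded by Some (alpha, n),
     so ht (Some (alpha,n)) = alpha; the root <> is coded by None, ht None = -1
     (coded as None : option W). *)

Section Defs.
Context {W : Type} (lt : W -> W -> Prop).

Definition Pt := option (W * nat).

Definition ht (x : Pt) : option W :=
  match x with None => None | Some (a, _) => Some a end.

Definition hlt (a b : option W) : Prop :=
  match a, b with
  | None, Some _ => True
  | Some a', Some b' => lt a' b'
  | _, _ => False
  end.

Definition countable {X : Type} (P : X -> Prop) : Prop :=
  exists f : X -> nat, forall x y, P x -> P y -> f x = f y -> x = y.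

Definition is_omega1 : Prop :=
  (forall a, ~ lt a a) /\
  (forall a b c, lt a b -> lt b c -> lt a c) /\
  (forall a b, lt a b \/ a = b \/ lt b a) /\
  well_founded lt /\
  ~ countable (fun _ : W => True) /\
  (forall a, countable (fun b => lt b a)).

Definition is_limit (d : W) : Prop :=
  (exists b, lt b d) /\ (forall b, lt b d -> exists c, lt b c /\ lt c d).

Definition is_tree_order (S : Pt -> Prop) (R : Pt -> Pt -> Prop) : Prop :=
  (forall x y, R x y -> S x /\ S y) /\
  (forall x, ~ R x x) /\
  (forall x y z, R x y -> R y z -> R x z) /\
  S None /\
  (forall x, S x -> x <> None -> R None x) /\
  (forall x y z, R y x -> R z x -> y = z \/ R y z \/ R z y).

Definition meet (R : Pt -> Pt -> Prop) (x y m : Pt) : Prop :=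
  (m = x \/ R m x) /\ (m = y \/ R m y) /\
  (forall z, (z = x \/ R z x) -> (z = y \/ R z y) -> z = m \/ R z m).

Definition perp (R : Pt -> Pt -> Prop) (x y : Pt) : Prop :=
  x <> y /\ ~ R x y /\ ~ R y x.

Definition is_chain (S : Pt -> Prop) (R : Pt -> Pt -> Prop) (B : Pt -> Prop) :=
  (forall x, B x -> S x) /\
  (forall x y, B x -> B y -> x = y \/ R x y \/ R y x).

Definition is_branch (S : Pt -> Prop) (R : Pt -> Pt -> Prop) (B : Pt -> Prop) :=
  is_chain S R B /\
  (forall C, is_chain S R C -> (forall x, B x -> C x) -> forall x, C x -> B x).

Definition inA (S : Pt -> Prop) (R : Pt -> Pt -> Prop) : Prop :=
  is_tree_order S R /\
  (* lev_alpha(T) ⊆ [omega alpha, omega alpha + omega): the tree level of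
     every non-root x equals ht x *)
  (forall x y, S x -> R y x -> hlt (ht y) (ht x)) /\
  (forall a n b, S (Some (a, n)) -> lt b a ->
       exists y, R y (Some (a, n)) /\ ht y = Some b) /\
  (forall a, exists n, S (Some (a, n))) /\
  (forall B, is_branch S R B -> countable B) /\
  (forall x y d, S x -> S y -> ht x = Some d -> ht y = Some d -> is_limit d ->
       x <> y -> ~ (forall z, R z x <-> R z y)).

Definition coloring_ok (R1 R2 : Pt -> Pt -> Prop) (c : Pt -> Pt -> nat -> Prop)
  : Prop :=
  forall x1 y1 x2 y2 n, c x1 y1 n -> c x2 y2 n -> (x1, y1) <> (x2, y2) ->
    ht x1 <> ht x2 /\ perp R1 x1 x2 /\ perp R2 y1 y2 /\
    exists m1 m2, meet R1 x1 x2 m1 /\ meet R2 y1 y2 m2 /\ hlt (ht m2) (ht m1).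

Definition limit_pair (S1 S2 : Pt -> Prop) (x y : Pt) : Prop :=
  exists d, is_limit d /\ S1 x /\ S2 y /\ ht x = Some d /\ ht y = Some d.

(* (T1, T2, c) in A_2^sp, c given as a relation (graph of a function) *)
Definition inA2sp (S1 : Pt -> Prop) (R1 : Pt -> Pt -> Prop)
  (S2 : Pt -> Prop) (R2 : Pt -> Pt -> Prop) (c : Pt -> Pt -> nat -> Prop) : Prop :=
  inA S1 R1 /\ inA S2 R2 /\
  (forall x y, (exists n, c x y n) <-> limit_pair S1 S2 x y) /\
  (forall x y n m, c x y n -> c x y m -> n = m) /\
  coloring_ok R1 R2 c.

Record cond : Type := Cond {
  cu : list Pt;
  cv : list Pt;
  clt : Pt -> Pt -> Prop;
  cc : Pt -> Pt -> option nat }.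

Definition inQ (TS : Pt -> Prop) (tlt : Pt -> Pt -> Prop) (p : cond) : Prop :=
  let u := fun x => In x (cu p) in
  let v := fun x => In x (cv p) in
  u None /\ v None /\ (forall y, v y -> TS y) /\
  (forall a, v a -> exists b, u b /\ ht a = ht b) /\
  is_tree_order u (clt p) /\
  (forall x y, clt p x y -> hlt (ht x) (ht y)) /\
  (forall x y, u x -> u y -> x <> y -> exists m, u m /\ meet (clt p) x y m) /\
  (forall x y, (exists n, cc p x y = Some n) <-> limit_pair u v x y) /\
  coloring_ok (clt p) tlt (fun x y n => cc p x y = Some n).

(* p <= q : q extends p *)
Definition Qle (p q : cond) : Prop :=
  (forall x, In x (cu p) -> In x (cu q)) /\
  (forall x, In x (cv p) -> In x (cv q)) /\
  (forall x y, clt p x y -> clt q x y) /\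
  (forall x y n, cc p x y = Some n -> cc q x y = Some n) /\
  (forall x y m, In x (cu p) -> In y (cu p) -> x <> y ->
     meet (clt p) x y m -> meet (clt q) x y m).

Definition Qdense (TS : Pt -> Prop) (tlt : Pt -> Pt -> Prop) (D : cond -> Prop) :=
  (forall p, D p -> inQ TS tlt p) /\
  (forall p, inQ TS tlt p -> exists q, D q /\ Qle p q).

Definition Qfilter (TS : Pt -> Prop) (tlt : Pt -> Pt -> Prop) (G : cond -> Prop) :=
  (forall p, G p -> inQ TS tlt p) /\
  (exists p, G p) /\
  (forall p q, G q -> inQ TS tlt p -> Qle p q -> G p) /\
  (forall p q, G p -> G q -> exists r, G r /\ Qle p r /\ Qle q r).

End Defs.

From Stdlib Require Import List Arith Lia Cantor.
From Stdlib Require Import Classical ClassicalEpsilon FunctionalExtensionality.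
Set Implicit Arguments.
Unset Strict Implicit.

(* The generic object has to meet aleph_1 requirements: every point of
   omega_1 is a node, every node has a predecessor on each lower level, every
   node of T is in [v]. Each requirement is dense, by two ways of extending a
   condition: inserting a fresh node into the finite tree below a given node at
   the gap of its branch, and adding a node of T to [v]. Either way every new
   pair on a common limit level gets a brand-new colour, which preserves the
   colouring condition; and there are only aleph_1 requirements because
   omega_1 * omega_1 injects into omega_1.
   For a filter meeting them all, the union T* is a normal tree of height
   omega_1, and the union colouring is as required because meets never change
   when a condition is extended. An uncountable branch of T* would meet every
   limit level; its nodes there are pairwise comparable, so they carry pairwise
   distinct colours, injecting the uncountably many limit ordinals into nat. *)

(** * Cardinal arithmetic below omega_1 *)

Section Omega1.
Context {W : Type} (lt : W -> W -> Prop) (Hw : is_omega1 lt).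

Lemma lt_irrefl a : ~ lt a a.
Proof. apply Hw. Qed.

Lemma lt_trans a b c : lt a b -> lt b c -> lt a c.
Proof. apply Hw. Qed.

Lemma lt_total a b : lt a b \/ a = b \/ lt b a.
Proof. apply Hw. Qed.

Lemma lt_wf : well_founded lt.
Proof. apply Hw. Qed.

Lemma segment_countable a : countable (fun b => lt b a).
Proof. apply Hw. Qed.

Lemma W_uncountable : ~ countable (fun _ : W => True).
Proof. apply Hw. Qed.

Lemma W_inhabited : inhabited W.
Proof.
  apply NNPP; intro Hempty; apply W_uncountable.
  exists (fun _ => 0); intro x; exfalso; exact (Hempty (inhabits x)).
Qed.

Lemma lt_le_trans a b c : lt a b -> lt b c \/ b = c -> lt a c.
Proof. intros Hab [Hbc|<-]; [exact (lt_trans Hab Hbc)|exact Hab]. Qed.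

Lemma countable_le a : countable (fun b => lt b a \/ b = a).
Proof.
  destruct (segment_countable a) as [f Hf].
  exists (fun b => if excluded_middle_informative (b = a) then 0 else S (f b)).
  intros x y Hx Hy.
  destruct (excluded_middle_informative (x = a)), (excluded_middle_informative (y = a));
    try congruence.
  intros [= E]. apply Hf; auto; [destruct Hx|destruct Hy]; tauto.
Qed.

Lemma countable_bounded (X : W -> Prop) :
  countable X -> exists c, forall x, X x -> lt x c.
Proof.
  intros [g Hg]. apply NNPP; intro Hunb.
  assert (Hsel : forall c, exists x, X x /\ (lt c x \/ c = x)).
  { intro c. apply NNPP; intro Hc. apply Hunb. exists c. intros x Xx.
    destruct (lt_total x c) as [h|[h|h]]; auto; exfalso; apply Hc; exists x; auto. }
  apply choice in Hsel as [sel Hsel].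
  destruct (choice _ countable_le) as [F HF].
  (* code [c] by an element of [X] above it together with its rank below that element *)
  apply W_uncountable. exists (fun c => Cantor.to_nat (g (sel c), F (sel c) c)).
  intros x y _ _ E.
  apply (f_equal Cantor.of_nat) in E. rewrite !Cantor.cancel_of_to in E. injection E as E1 E2.
  destruct (Hsel x) as [Xx Hx], (Hsel y) as [Xy Hy].
  assert (Es : sel x = sel y) by (apply Hg; auto).
  rewrite Es in E2, Hx. apply (HF (sel y)); destruct Hx, Hy; subst; auto.
Qed.

Lemma exists_above a : exists b, lt a b.
Proof.
  destruct (@countable_bounded (fun b => b = a)) as [c Hc].
  - exists (fun _ => 0). intros; subst; reflexivity.
  - exists c; auto.
Qed.

Lemma exists_least (P : W -> Prop) :
  (exists x, P x) -> exists m, P m /\ forall y, P y -> ~ lt y m.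
Proof.
  intros [x Px]. apply NNPP; intro Hno. revert Px.
  induction (lt_wf x) as [x _ IH]; intro Px.
  apply Hno. exists x. split; [exact Px|]. intros y Py Hyx. exact (IH y Hyx Py).
Qed.

Definition next (a : W) : W := epsilon W_inhabited (lt a).

Lemma lt_next a : lt a (next a).
Proof. unfold next. apply epsilon_spec, exists_above. Qed.

Definition iter_next (k : nat) (a : W) : W := Nat.iter k next a.

Lemma iter_next_lt k k' a : k < k' -> lt (iter_next k a) (iter_next k' a).
Proof.
  induction 1; [apply lt_next|]. exact (lt_trans IHle (lt_next _)).
Qed.

Lemma iter_next_le k a : lt a (iter_next k a) \/ a = iter_next k a.
Proof. destruct k; [right; reflexivity|left; apply (iter_next_lt a (Nat.lt_0_succ k))]. Qed.

Lemma iter_next_inj k k' a : iter_next k a = iter_next k' a -> k = k'.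
Proof.
  intro E. destruct (Nat.lt_total k k') as [h|[h|h]]; auto; exfalso;
    pose proof (iter_next_lt a h) as H; rewrite E in H; exact (lt_irrefl H).
Qed.

Lemma limit_above c : exists d, is_limit lt d /\ lt c d.
Proof.
  set (X := fun x => exists k, x = iter_next k c).
  destruct (@countable_bounded X) as [u Hu].
  { exists (fun x => epsilon (inhabits 0) (fun k => x = iter_next k c)).
    intros x y Hx Hy E.
    rewrite (epsilon_spec (inhabits 0) _ Hx), (epsilon_spec (inhabits 0) _ Hy), E. reflexivity. }
  destruct (@exists_least (fun d => forall x, X x -> lt x d)) as [l [Hl Hleast]];
    [exists u; exact Hu|].
  assert (Hcl : lt c l) by (apply Hl; exists 0; reflexivity).
  exists l. split; [|exact Hcl]. split; [exists c; exact Hcl|].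
  intros b Hb.
  destruct (not_all_ex_not _ _ (fun H => Hleast b H Hb)) as [x Hx].
  apply imply_to_and in Hx as [[k ->] Hkb].
  exists (iter_next (S k) c). split.
  - destruct (lt_total (iter_next k c) b) as [h|[<-|h]]; [contradiction| |].
    + apply lt_next.
    + exact (lt_trans h (lt_next _)).
  - apply Hl. exists (S k). reflexivity.
Qed.

Lemma limits_uncountable : ~ countable (is_limit lt).
Proof.
  intro H. destruct (countable_bounded H) as [u Hu].
  destruct (limit_above u) as [d [Hd Hud]].
  exact (lt_irrefl (lt_trans Hud (Hu d Hd))).
Qed.

(* The blocks [iter_next k (block_start a)], [k : nat], are pairwise disjoint:
   [block_start a] is chosen above the blocks of all [b < a]. *)
Definition block_start_step (a : W) (rec : forall b, lt b a -> W) : W :=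
  epsilon W_inhabited (fun c => forall b (H : lt b a) k, lt (iter_next k (rec b H)) c).

Definition block_start : W -> W := Fix lt_wf (fun _ => W) block_start_step.

Lemma block_start_eq a : block_start a = @block_start_step a (fun b _ => block_start b).
Proof.
  unfold block_start. rewrite Fix_eq; [reflexivity|].
  intros x f g Hfg.
  replace g with f; [reflexivity|].
  apply functional_extensionality_dep; intro b.
  apply functional_extensionality_dep; intro H. apply Hfg.
Qed.

Lemma block_start_above a b k : lt b a -> lt (iter_next k (block_start b)) (block_start a).
Proof.
  intro Hba. rewrite (block_start_eq a). unfold block_start_step.
  apply (epsilon_spec W_inhabited
           (fun c => forall b (_ : lt b a) k, lt (iter_next k (block_start b)) c)); [|exact Hba].
  set (X := fun x => exists b k, lt b a /\ x = iter_next k (block_start b)).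
  destruct (segment_countable a) as [fa Hfa].
  destruct (@countable_bounded X) as [c Hc].
  - set (code x := epsilon (inhabits (a, 0))
                     (fun bk : W * nat =>
                        lt (fst bk) a /\ x = iter_next (snd bk) (block_start (fst bk)))).
    assert (Hcode : forall x, X x ->
              lt (fst (code x)) a /\ x = iter_next (snd (code x)) (block_start (fst (code x)))).
    { intros x [b' [k' H]]. apply epsilon_spec. exists (b', k'). exact H. }
    exists (fun x => Cantor.to_nat (fa (fst (code x)), snd (code x))).
    intros x y Hx Hy E.
    apply (f_equal Cantor.of_nat) in E. rewrite !Cantor.cancel_of_to in E. injection E as E1 E2.
    destruct (Hcode x Hx) as [Lx ->], (Hcode y Hy) as [Ly ->].
    rewrite E2, (Hfa _ _ Lx Ly E1). reflexivity.
  - exists c. intros b' Hb' k'. apply Hc. exists b', k'. auto.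
Qed.

Lemma block_inj a a' k k' :
  iter_next k (block_start a) = iter_next k' (block_start a') -> a = a' /\ k = k'.
Proof.
  intro E. destruct (lt_total a a') as [h|[<-|h]].
  - exfalso. pose proof (block_start_above k h) as H. rewrite E in H.
    exact (lt_irrefl (lt_le_trans H (iter_next_le _ _))).
  - split; [reflexivity|eapply iter_next_inj; exact E].
  - exfalso. pose proof (block_start_above k' h) as H. rewrite <- E in H.
    exact (lt_irrefl (lt_le_trans H (iter_next_le _ _))).
Qed.

Definition embeds (A : Type) : Prop := exists f : A -> W, forall x y, f x = f y -> x = y.

Lemma embeds_W_nat : embeds (W * nat).
Proof.
  exists (fun ak => iter_next (snd ak) (block_start (fst ak))).
  intros [a k] [a' k'] E. simpl in E. apply block_inj in E as [-> ->]. reflexivity.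
Qed.

Definition maxW (a b : W) : W := if excluded_middle_informative (lt a b) then b else a.

Lemma le_maxW_l a b : lt a (maxW a b) \/ a = maxW a b.
Proof. unfold maxW. destruct excluded_middle_informative; auto. Qed.

Lemma le_maxW_r a b : lt b (maxW a b) \/ b = maxW a b.
Proof.
  unfold maxW. destruct excluded_middle_informative; auto.
  destruct (lt_total a b) as [h|[<-|h]]; tauto.
Qed.

(* [(b, c)] is coded by [maxW b c] and the ranks of [b] and [c] in the countable
   segment below it. *)
Lemma embeds_W_W : embeds (W * W).
Proof.
  destruct embeds_W_nat as [j Hj].
  destruct (choice _ countable_le) as [F HF].
  exists (fun bc => let m := maxW (fst bc) (snd bc) in
                    j (m, Cantor.to_nat (F m (fst bc), F m (snd bc)))).
  intros [b c] [b' c'] E. cbn [fst snd] in E. apply Hj in E.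
  pose proof (f_equal fst E) as Em. pose proof (f_equal snd E) as Ecode.
  cbn [fst snd] in Em, Ecode.
  apply (f_equal Cantor.of_nat) in Ecode. rewrite !Cantor.cancel_of_to in Ecode.
  injection Ecode as Eb Ec. rewrite Em in Eb, Ec.
  f_equal; symmetry.
  - apply (HF _ _ _ (le_maxW_l b' c')); [rewrite <- Em; apply le_maxW_l|congruence].
  - apply (HF _ _ _ (le_maxW_r b' c')); [rewrite <- Em; apply le_maxW_r|congruence].
Qed.

Lemma embeds_prod A B : embeds A -> embeds B -> embeds (A * B).
Proof.
  intros [f Hf] [g Hg]. destruct embeds_W_W as [j Hj].
  exists (fun ab => j (f (fst ab), g (snd ab))).
  intros [a b] [a' b'] E. apply Hj in E. injection E as Ea Eb.
  rewrite (Hf _ _ Ea), (Hg _ _ Eb). reflexivity.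
Qed.

Lemma embeds_sum A B : embeds A -> embeds B -> embeds (A + B).
Proof.
  intros [f Hf] [g Hg]. destruct embeds_W_nat as [j Hj].
  exists (fun s => match s with inl a => j (f a, 0) | inr b => j (g b, 1) end).
  intros [a|b] [a'|b'] E; apply Hj in E; try discriminate;
    injection E as E; f_equal; auto.
Qed.

Lemma embeds_option A : embeds A -> embeds (option A).
Proof.
  intros [f Hf]. destruct embeds_W_nat as [j Hj]. destruct W_inhabited as [w].
  exists (fun o => match o with Some a => j (f a, 1) | None => j (w, 0) end).
  intros [a|] [a'|] E; apply Hj in E; try discriminate; [|reflexivity].
  injection E as E. f_equal; auto.
Qed.

Lemma embeds_W : embeds W.
Proof. exists (fun w => w). auto. Qed.

Lemma embeds_Pt : embeds (@Pt W).
Proof.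
  apply embeds_option, embeds_prod; [exact embeds_W|].
  destruct embeds_W_nat as [j Hj]. destruct W_inhabited as [w].
  exists (fun n => j (w, n)). intros n n' E. apply Hj in E. congruence.
Qed.

End Omega1.

(** * Trees with heights *)

Section Heights.
Context {W : Type} (lt : W -> W -> Prop) (Hw : is_omega1 lt).

Lemma hlt_irrefl (a : option W) : ~ hlt lt a a.
Proof. destruct a; simpl; [apply (lt_irrefl Hw)|auto]. Qed.

Lemma hlt_trans (a b c : option W) : hlt lt a b -> hlt lt b c -> hlt lt a c.
Proof. destruct a, b, c; simpl; try tauto. apply (lt_trans Hw). Qed.

Lemma hlt_total (a b : option W) : a <> b -> hlt lt a b \/ hlt lt b a.
Proof.
  destruct a as [a|], b as [b|]; simpl; auto. intro Hab.
  destruct (lt_total Hw a b) as [h|[h|h]]; [auto|congruence|auto].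
Qed.

End Heights.

Section Trees.
Context {W : Type}.

Definition weak (R : @Pt W -> @Pt W -> Prop) (x y : @Pt W) : Prop := x = y \/ R x y.

Lemma meet_refl (R : @Pt W -> @Pt W -> Prop) x : meet R x x x.
Proof. split; [left; reflexivity|split; [left; reflexivity|auto]]. Qed.

Lemma meet_sym (R : @Pt W -> @Pt W -> Prop) x y m : meet R x y m -> meet R y x m.
Proof. intros [h1 [h2 h3]]. split; [|split]; auto. Qed.

Variables (S : @Pt W -> Prop) (R : @Pt W -> @Pt W -> Prop).
Hypothesis HR : is_tree_order S R.

Lemma tree_in_l x y : R x y -> S x.
Proof. intro H. exact (proj1 (proj1 HR x y H)). Qed.

Lemma tree_in_r x y : R x y -> S y.
Proof. intro H. exact (proj2 (proj1 HR x y H)). Qed.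

Lemma tree_irrefl x : ~ R x x.
Proof. apply HR. Qed.

Lemma tree_trans x y z : R x y -> R y z -> R x z.
Proof. apply HR. Qed.

Lemma tree_root_in : S None.
Proof. apply HR. Qed.

Lemma tree_root_below x : S x -> x <> None -> R None x.
Proof. apply HR. Qed.

Lemma tree_pred_linear x y z : R y x -> R z x -> y = z \/ R y z \/ R z y.
Proof. apply HR. Qed.

Lemma tree_not_below_root x : ~ R x None.
Proof.
  intro Hx. assert (Hn : x <> None) by (intros ->; exact (tree_irrefl Hx)).
  exact (tree_irrefl (tree_trans Hx (tree_root_below (tree_in_l Hx) Hn))).
Qed.

Lemma weak_root x : S x -> weak R None x.
Proof.
  intro Hx. destruct (classic (x = None)) as [->|Hn]; [left; reflexivity|].
  right. exact (tree_root_below Hx Hn).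
Qed.

Lemma weak_below_root x : weak R x None -> x = None.
Proof. intros [->|H]; [reflexivity|exfalso; exact (tree_not_below_root H)]. Qed.

Lemma weak_trans x y z : weak R x y -> weak R y z -> weak R x z.
Proof.
  intros [<-|Hxy] [<-|Hyz];
    [left; reflexivity|right; exact Hyz|right; exact Hxy|right; exact (tree_trans Hxy Hyz)].
Qed.

Lemma weak_below_comparable x a b : weak R a x -> weak R b x -> a = b \/ R a b \/ R b a.
Proof.
  intros [->|Ha] [<-|Hb]; auto. exact (tree_pred_linear Ha Hb).
Qed.

Lemma meet_exists x y :
  (forall x y, S x -> S y -> x <> y -> exists m, S m /\ meet R x y m) ->
  S x -> S y -> exists m, meet R x y m.
Proof.
  intros Hmeets Hx Hy. destruct (classic (x = y)) as [<-|Hxy].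
  - exists x. apply meet_refl.
  - destruct (Hmeets x y Hx Hy Hxy) as [m [_ Hm]]. exists m. exact Hm.
Qed.

Lemma branch_down_closed B x y : is_branch S R B -> B x -> R y x -> B y.
Proof.
  intros [[BS Bchain] Bmax] Bx Hyx.
  set (C := fun w => B w \/ w = y).
  assert (HC : is_chain S R C).
  { split.
    - intros w [Bw| ->]; [exact (BS w Bw)|exact (tree_in_l Hyx)].
    - intros u w [Bu| ->] [Bw| ->]; auto.
      + destruct (Bchain u x Bu Bx) as [<-|[h|h]]; [auto| |].
        * exact (tree_pred_linear h Hyx).
        * right; right. exact (tree_trans Hyx h).
      + destruct (Bchain w x Bw Bx) as [<-|[h|h]]; [auto| |].
        * exact (tree_pred_linear Hyx h).
        * right; left. exact (tree_trans Hyx h). }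
  apply (Bmax C HC); [intros w Bw; left; exact Bw|right; reflexivity].
Qed.

End Trees.

Lemma chain_countable_of_bounded {W : Type} (lt : W -> W -> Prop) (Hw : is_omega1 lt)
  (U B : @Pt W -> Prop) (R : @Pt W -> @Pt W -> Prop) (a : W) :
  is_chain U R B -> (forall s t, R s t -> hlt lt (ht s) (ht t)) ->
  (forall x, B x -> hlt lt (ht x) (Some a)) -> countable B.
Proof.
  intros [_ Hchain] Hht Hbound.
  destruct (segment_countable Hw a) as [f Hf].
  exists (fun x => match x with None => 0 | Some (c, _) => S (f c) end).
  assert (Hlev : forall x y, B x -> B y -> ht x = ht y -> x = y).
  { intros x y Bx By E. destruct (Hchain x y Bx By) as [h|[h|h]]; [exact h| |];
      exfalso; pose proof (Hht _ _ h) as H; rewrite E in H; exact (hlt_irrefl Hw H). }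
  intros [[c k]|] [[c' k']|] Bx By E; try discriminate; [|reflexivity].
  injection E as E. apply Hlev; [exact Bx|exact By|].
  pose proof (Hbound _ Bx) as Hc. pose proof (Hbound _ By) as Hc'. simpl in *.
  rewrite (Hf c c' Hc Hc' E). reflexivity.
Qed.

(** * Inserting a node into a tree *)

Section Cut.
Context {W : Type}.
Variables (S : @Pt W -> Prop) (R : @Pt W -> @Pt W -> Prop) (z : @Pt W) (Dn Up : @Pt W -> Prop).
Hypothesis HR : is_tree_order S R.
Hypothesis Hz : ~ S z.
Hypothesis HDS : forall s, Dn s -> S s.
Hypothesis HUS : forall t, Up t -> S t.
Hypothesis HD0 : Dn None.
Hypothesis HDdown : forall r s, Dn s -> R r s -> Dn r.
Hypothesis HUup : forall t r, Up t -> R t r -> Up r.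
Hypothesis HDU : forall s t, Dn s -> Up t -> R s t.
Hypothesis HDlin : forall s1 s2, Dn s1 -> Dn s2 -> s1 = s2 \/ R s1 s2 \/ R s2 s1.
Hypothesis HUpred : forall s t, Up t -> R s t -> Dn s \/ Up s.

Definition cut (s t : @Pt W) : Prop := R s t \/ (t = z /\ Dn s) \/ (s = z /\ Up t).

Lemma old_ne_z s : S s -> s <> z.
Proof. intros Hs ->. exact (Hz Hs). Qed.

Lemma cut_below_z r : cut r z -> Dn r.
Proof.
  intros [h|[[_ h]|[-> h]]]; [exfalso; exact (Hz (tree_in_r HR h))|exact h|].
  exfalso. exact (Hz (HUS h)).
Qed.

Lemma cut_above_z t : cut z t -> Up t.
Proof.
  intros [h|[[-> h]|[_ h]]]; [exfalso; exact (Hz (tree_in_l HR h))| |exact h].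
  exfalso. exact (Hz (HDS h)).
Qed.

Lemma cut_to_old s t : cut s t -> t <> z -> R s t \/ (s = z /\ Up t).
Proof. intros [h|[[-> _]|h]] Ht; auto. congruence. Qed.

Lemma cut_old s t : cut s t -> s <> z -> t <> z -> R s t.
Proof. intros h Hs Ht. destruct (cut_to_old h Ht) as [h'|[? _]]; [exact h'|congruence]. Qed.

Lemma weak_cut_old s t : weak cut s t -> s <> z -> t <> z -> weak R s t.
Proof. intros [<-|h] Hs Ht; [left; reflexivity|right; exact (cut_old h Hs Ht)]. Qed.

Lemma weak_cut_of_old s t : weak R s t -> weak cut s t.
Proof. intros [<-|h]; [left; reflexivity|right; left; exact h]. Qed.

Lemma cut_tree_order : is_tree_order (fun x => z = x \/ S x) cut.
Proof.
  split; [|split; [|split; [|split; [|split]]]].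
  - intros x y [h|[[-> h]|[-> h]]].
    + split; right; [exact (tree_in_l HR h)|exact (tree_in_r HR h)].
    + split; [right; exact (HDS h)|left; reflexivity].
    + split; [left; reflexivity|right; exact (HUS h)].
  - intros x [h|[[-> h]|[-> h]]]; [exact (tree_irrefl HR h)|exact (Hz (HDS h))|exact (Hz (HUS h))].
  - intros x y w [h|[[-> h]|[-> h]]] [h'|[[-> h']|[E h']]].
    + left. exact (tree_trans HR h h').
    + right; left. split; [reflexivity|exact (HDdown h' h)].
    + subst y. exfalso. exact (Hz (tree_in_r HR h)).
    + exfalso. exact (Hz (tree_in_l HR h')).
    + right; left. split; [reflexivity|exact h].
    + left. exact (HDU h h').
    + right; right. split; [reflexivity|exact (HUup h h')].
    + exfalso. exact (tree_irrefl HR (HDU h' h)).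
    + subst y. exfalso. exact (Hz (HUS h)).
  - right. exact (tree_root_in HR).
  - intros x [<-|Hx] Hn; [right; left; split; [reflexivity|exact HD0]|].
    left. exact (tree_root_below HR Hx Hn).
  - intros x y w Hy Hw.
    destruct (classic (x = z)) as [->|Hx].
    + destruct (HDlin (cut_below_z Hy) (cut_below_z Hw)) as [h|[h|h]];
        [left; exact h|right; left; left; exact h|right; right; left; exact h].
    + destruct (cut_to_old Hy Hx) as [hy|[-> Ux]], (cut_to_old Hw Hx) as [hw|[-> Ux']].
      * destruct (tree_pred_linear HR hy hw) as [h|[h|h]];
          [left; exact h|right; left; left; exact h|right; right; left; exact h].
      * destruct (HUpred Ux' hy) as [h|h]; [right; left; right; left|right; right; right]; auto.
      * destruct (HUpred Ux hw) as [h|h]; [right; right; right; left|right; left; right]; auto.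
      * left; reflexivity.
Qed.

Lemma cut_ht (lt : W -> W -> Prop) :
  (forall s t, R s t -> hlt lt (ht s) (ht t)) ->
  (forall s, Dn s -> hlt lt (ht s) (ht z)) ->
  (forall t, Up t -> hlt lt (ht z) (ht t)) ->
  forall s t, cut s t -> hlt lt (ht s) (ht t).
Proof. intros Hht HDht HUht s t [h|[[-> h]|[-> h]]]; auto. Qed.

Hypothesis HUmeet : forall s t m, Up s -> Up t -> s <> t -> meet R s t m -> Up m.
Hypothesis HDmeet : forall t, S t -> ~ Up t ->
  exists m, Dn m /\ weak R m t /\ forall r, Dn r -> weak R r t -> weak R r m.

Lemma cut_meet_old x y m : S x -> S y -> x <> y -> meet R x y m -> meet cut x y m.
Proof.
  intros Hx Hy Hxy [Hmx [Hmy Hmax]].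
  split; [exact (weak_cut_of_old Hmx)|split; [exact (weak_cut_of_old Hmy)|]].
  intros r Hrx Hry. destruct (classic (r = z)) as [Er|Hr].
  - subst r. destruct Hrx as [E|Hrx]; [exfalso; exact (old_ne_z Hx (eq_sym E))|].
    destruct Hry as [E|Hry]; [exfalso; exact (old_ne_z Hy (eq_sym E))|].
    right; right; right. split; [reflexivity|].
    exact (HUmeet (cut_above_z Hrx) (cut_above_z Hry) Hxy (conj Hmx (conj Hmy Hmax))).
  - apply weak_cut_of_old, Hmax;
      [exact (weak_cut_old Hrx Hr (old_ne_z Hx))|exact (weak_cut_old Hry Hr (old_ne_z Hy))].
Qed.

Lemma cut_meet_z t : S t -> exists m, (z = m \/ S m) /\ meet cut z t m.
Proof.
  intro Ht. destruct (classic (Up t)) as [Ut|Ut].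
  - exists z. split; [left; reflexivity|].
    split; [left; reflexivity|split; [right; right; right; auto|]].
    intros r Hr _. exact Hr.
  - destruct (HDmeet Ht Ut) as [m [Dm [Hmt Hmax]]].
    exists m. split; [right; exact (HDS Dm)|].
    split; [right; right; left; auto|split; [exact (weak_cut_of_old Hmt)|]].
    intros r [Er|Hrz] Hrt.
    + subst r. exfalso.
      destruct Hrt as [E|Hrt]; [exact (old_ne_z Ht (eq_sym E))|exact (Ut (cut_above_z Hrt))].
    + pose proof (cut_below_z Hrz) as Dr.
      apply weak_cut_of_old, Hmax; [exact Dr|].
      exact (weak_cut_old Hrt (old_ne_z (HDS Dr)) (old_ne_z Ht)).
Qed.

Lemma cut_meets :
  (forall x y, S x -> S y -> x <> y -> exists m, S m /\ meet R x y m) ->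
  forall x y, (z = x \/ S x) -> (z = y \/ S y) -> x <> y ->
  exists m, (z = m \/ S m) /\ meet cut x y m.
Proof.
  intros Hmeets x y [<-|Hx] [<-|Hy] Hxy.
  - congruence.
  - exact (cut_meet_z Hy).
  - destruct (cut_meet_z Hx) as [m [Hm Mm]]. exists m. split; [exact Hm|exact (meet_sym Mm)].
  - destruct (Hmeets x y Hx Hy Hxy) as [m [Hm Mm]].
    exists m. split; [right; exact Hm|exact (cut_meet_old Hx Hy Hxy Mm)].
Qed.

End Cut.

Section Insert.
Context {W : Type} (lt : W -> W -> Prop) (Hw : is_omega1 lt).
Variables (S : @Pt W -> Prop) (R : @Pt W -> @Pt W -> Prop) (x z : @Pt W).
Hypothesis HR : is_tree_order S R.
Hypothesis Hht : forall s t, R s t -> hlt lt (ht s) (ht t).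
Hypothesis Hmeets : forall s t, S s -> S t -> s <> t -> exists m, S m /\ meet R s t m.
Hypothesis Hx : S x.
Hypothesis Hz : ~ S z.
Hypothesis Hlev : forall s, weak R s x -> ht s <> ht z.

(* [z] is inserted on the branch below [x], at the place given by its height. *)
Definition below_cut (s : @Pt W) : Prop := weak R s x /\ hlt lt (ht s) (ht z).

Definition above_cut (t : @Pt W) : Prop :=
  exists e, weak R e x /\ hlt lt (ht z) (ht e) /\ weak R e t.

Definition insert_rel : @Pt W -> @Pt W -> Prop := cut R z below_cut above_cut.

Lemma hlt_weak_trans a s t : hlt lt a (ht s) -> weak R s t -> hlt lt a (ht t).
Proof. intros Ha [<-|Hst]; [exact Ha|exact (hlt_trans Hw Ha (Hht Hst))]. Qed.

Lemma weak_below_x_cut s : weak R s x -> below_cut s \/ above_cut s.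
Proof.
  intro Hs. destruct (hlt_total Hw (Hlev Hs)) as [h|h]; [left; split; assumption|].
  right. exists s. split; [exact Hs|split; [exact h|left; reflexivity]].
Qed.

Lemma weak_in s t : weak R s t -> S t -> S s.
Proof. intros [->|h] Ht; [exact Ht|exact (tree_in_l HR h)]. Qed.

Lemma below_cut_in s : below_cut s -> S s.
Proof. intros [Hs _]. exact (weak_in Hs Hx). Qed.

Lemma above_cut_in t : above_cut t -> S t.
Proof.
  intros [e [He [_ [<-|Het]]]]; [exact (weak_in He Hx)|exact (tree_in_r HR Het)].
Qed.

Lemma below_cut_root : below_cut None.
Proof.
  split; [exact (weak_root HR Hx)|].
  destruct z as [[b k]|]; [exact I|exfalso; exact (Hz (tree_root_in HR))].
Qed.

Lemma below_cut_down r s : below_cut s -> R r s -> below_cut r.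
Proof.
  intros [Hs Hsz] Hrs. split; [exact (weak_trans HR (or_intror Hrs) Hs)|].
  exact (hlt_trans Hw (Hht Hrs) Hsz).
Qed.

Lemma above_cut_up t r : above_cut t -> R t r -> above_cut r.
Proof.
  intros [e [He [Hez Het]]] Htr. exists e.
  split; [exact He|split; [exact Hez|exact (weak_trans HR Het (or_intror Htr))]].
Qed.

Lemma below_above s t : below_cut s -> above_cut t -> R s t.
Proof.
  intros [Hs Hsz] [e [He [Hez Het]]].
  destruct (weak_below_comparable HR Hs He) as [<-|[h|h]].
  - exfalso. exact (hlt_irrefl Hw (hlt_trans Hw Hsz Hez)).
  - destruct Het as [<-|Het]; [exact h|exact (tree_trans HR h Het)].
  - exfalso. exact (hlt_irrefl Hw (hlt_trans Hw (hlt_trans Hw (Hht h) Hsz) Hez)).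
Qed.

Lemma below_cut_linear s1 s2 : below_cut s1 -> below_cut s2 -> s1 = s2 \/ R s1 s2 \/ R s2 s1.
Proof. intros [H1 _] [H2 _]. exact (weak_below_comparable HR H1 H2). Qed.

Lemma above_cut_pred s t : above_cut t -> R s t -> below_cut s \/ above_cut s.
Proof.
  intros [e [He [Hez Het]]] Hst.
  destruct (weak_below_comparable HR (or_intror Hst) Het) as [->|[h|h]].
  - right. exists e. split; [exact He|split; [exact Hez|left; reflexivity]].
  - exact (weak_below_x_cut (weak_trans HR (or_intror h) He)).
  - right. exists e. split; [exact He|split; [exact Hez|right; exact h]].
Qed.

Lemma above_cut_meet s t m :
  above_cut s -> above_cut t -> s <> t -> meet R s t m -> above_cut m.
Proof.
  intros [e1 [He1 [Hez1 Hes1]]] [e2 [He2 [Hez2 Het2]]] _ [_ [_ Hmax]].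
  destruct (weak_below_comparable HR He1 He2) as [<-|[h|h]].
  - exists e1. split; [exact He1|split; [exact Hez1|exact (Hmax e1 Hes1 Het2)]].
  - exists e1. split; [exact He1|split; [exact Hez1|]].
    exact (Hmax e1 Hes1 (weak_trans HR (or_intror h) Het2)).
  - exists e2. split; [exact He2|split; [exact Hez2|]].
    exact (Hmax e2 (weak_trans HR (or_intror h) Hes1) Het2).
Qed.

Lemma below_cut_max t : S t -> ~ above_cut t ->
  exists m, below_cut m /\ weak R m t /\ forall r, below_cut r -> weak R r t -> weak R r m.
Proof.
  intros Ht Ut. destruct (meet_exists Hmeets Hx Ht) as [m [Hmx [Hmt Hmax]]].
  exists m. split; [|split; [exact Hmt|intros r [Hrx _] Hrt; exact (Hmax r Hrx Hrt)]].
  destruct (weak_below_x_cut Hmx) as [Dm|[e [He [Hez Hem]]]]; [exact Dm|].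
  exfalso. apply Ut. exists e. split; [exact He|split; [exact Hez|exact (weak_trans HR Hem Hmt)]].
Qed.

Lemma insert_tree_order : is_tree_order (fun s => z = s \/ S s) insert_rel.
Proof.
  exact (cut_tree_order HR Hz below_cut_in above_cut_in below_cut_root below_cut_down
           above_cut_up below_above below_cut_linear above_cut_pred).
Qed.

Lemma insert_ht s t : insert_rel s t -> hlt lt (ht s) (ht t).
Proof.
  apply cut_ht; [exact Hht|intros r [_ h]; exact h|].
  intros r [e [_ [Hez Her]]]. exact (hlt_weak_trans Hez Her).
Qed.

Lemma insert_meets s t : (z = s \/ S s) -> (z = t \/ S t) -> s <> t ->
  exists m, (z = m \/ S m) /\ meet insert_rel s t m.
Proof.
  apply (cut_meets HR Hz below_cut_in above_cut_in above_cut_meet below_cut_max Hmeets).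
Qed.

Lemma insert_meet_old s t m : S s -> S t -> s <> t -> meet R s t m -> meet insert_rel s t m.
Proof. apply (cut_meet_old HR Hz below_cut_in above_cut_meet). Qed.

Lemma insert_rel_old s t : S s -> S t -> insert_rel s t -> R s t.
Proof. intros Hs Ht Hst. exact (cut_old Hst (old_ne_z Hz Hs) (old_ne_z Hz Ht)). Qed.

Lemma insert_below_x : hlt lt (ht z) (ht x) -> insert_rel z x.
Proof.
  intro Hzx. right; right. split; [reflexivity|].
  exists x. split; [left; reflexivity|split; [exact Hzx|left; reflexivity]].
Qed.

End Insert.

(** * Extending conditions *)

Lemma bounded_on_list (A : Type) (l : list A) (f : A -> nat) :
  exists N, forall a, In a l -> f a < N.
Proof.
  induction l as [|a l [N HN]]; [exists 0; intros _ []|].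
  exists (S (f a + N)). intros b [<-|Hb]; [lia|specialize (HN b Hb); lia].
Qed.

Lemma injective_on_list (A : Type) (l : list A) :
  exists g : A -> nat, forall a b, In a l -> In b l -> g a = g b -> a = b.
Proof.
  induction l as [|a l [g Hg]]; [exists (fun _ => 0); intros ? ? []|].
  exists (fun b => if excluded_middle_informative (b = a) then 0 else S (g b)).
  intros b b' Hb Hb'.
  destruct (excluded_middle_informative (b = a)), (excluded_middle_informative (b' = a));
    try congruence.
  intros [= E]. destruct Hb as [Hb|Hb], Hb' as [Hb'|Hb']; try congruence. exact (Hg _ _ Hb Hb' E).
Qed.

Section Colourings.
Context {W : Type} (lt : W -> W -> Prop).

Lemma coloring_ok_transfer (R1 R1' R2 : @Pt W -> @Pt W -> Prop) c (U : @Pt W -> Prop) :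
  coloring_ok lt R1 R2 c ->
  (forall x y n, c x y n -> U x) ->
  (forall x y, U x -> U y -> R1' x y -> R1 x y) ->
  (forall x y m, U x -> U y -> x <> y -> meet R1 x y m -> meet R1' x y m) ->
  coloring_ok lt R1' R2 c.
Proof.
  intros Hc HU Hsub Hmeet x1 y1 x2 y2 n C1 C2 Hne.
  destruct (Hc _ _ _ _ _ C1 C2 Hne) as [Hht [[Hx12 [N12 N21]] [Hy [m1 [m2 [M1 [M2 Hm]]]]]]].
  pose proof (HU _ _ _ C1) as U1. pose proof (HU _ _ _ C2) as U2.
  split; [exact Hht|split; [|split; [exact Hy|]]].
  - split; [exact Hx12|split; intro h; [apply N12|apply N21]; apply Hsub; auto].
  - exists m1, m2. split; [exact (Hmeet _ _ _ U1 U2 Hx12 M1)|split; assumption].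
Qed.

Variables (c : @Pt W -> @Pt W -> option nat) (D : @Pt W -> @Pt W -> Prop)
  (N : nat) (g : @Pt W * @Pt W -> nat).

Definition recolour (x y : @Pt W) : option nat :=
  match c x y with
  | Some n => Some n
  | None => if excluded_middle_informative (D x y) then Some (N + g (x, y)) else None
  end.

Lemma recolour_extends x y n : c x y = Some n -> recolour x y = Some n.
Proof. unfold recolour. intros ->. reflexivity. Qed.

Lemma recolour_cases x y n :
  recolour x y = Some n -> c x y = Some n \/ (D x y /\ n = N + g (x, y)).
Proof.
  unfold recolour. destruct (c x y) as [m|]; [intro Hm; left; exact Hm|].
  destruct excluded_middle_informative as [Hd|]; [|discriminate].
  intros [= <-]. right. split; [exact Hd|reflexivity].
Qed.

Hypothesis HcD : forall x y n, c x y = Some n -> D x y.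

Lemma recolour_dom x y : (exists n, recolour x y = Some n) <-> D x y.
Proof.
  split.
  - intros [n Hn]. destruct (recolour_cases Hn) as [h|[h _]]; [exact (HcD h)|exact h].
  - intro Hd. unfold recolour. destruct (c x y) as [n|]; [exists n; reflexivity|].
    destruct excluded_middle_informative; [eexists; reflexivity|contradiction].
Qed.

Lemma recolour_ok (R1 R2 : @Pt W -> @Pt W -> Prop) :
  coloring_ok lt R1 R2 (fun x y n => c x y = Some n) ->
  (forall x y n, c x y = Some n -> n < N) ->
  (forall x y x' y', D x y -> D x' y' -> g (x, y) = g (x', y') -> (x, y) = (x', y')) ->
  coloring_ok lt R1 R2 (fun x y n => recolour x y = Some n).
Proof.
  intros Hc HN Hg x1 y1 x2 y2 n C1 C2 Hne.
  destruct (recolour_cases C1) as [O1|[D1 E1]], (recolour_cases C2) as [O2|[D2 E2]].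
  - exact (Hc _ _ _ _ _ O1 O2 Hne).
  - specialize (HN _ _ _ O1). lia.
  - specialize (HN _ _ _ O2). lia.
  - exfalso. apply Hne, Hg; [exact D1|exact D2|lia].
Qed.

End Colourings.

Section Conditions.
Context {W : Type} (lt : W -> W -> Prop)
  (TS : @Pt W -> Prop) (tlt : @Pt W -> @Pt W -> Prop).

Notation inQ := (inQ lt TS tlt).

Section Projections.
Variable p : @cond W.
Hypothesis Hp : inQ p.

Lemma Q_root : In None (cu p).
Proof. apply Hp. Qed.

Lemma Q_v_root : In None (cv p).
Proof. apply Hp. Qed.

Lemma Q_v_in_T y : In y (cv p) -> TS y.
Proof. apply Hp. Qed.

Lemma Q_v_level y : In y (cv p) -> exists b, In b (cu p) /\ ht y = ht b.
Proof. apply Hp. Qed.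

Lemma Q_tree : is_tree_order (fun x => In x (cu p)) (clt p).
Proof. apply Hp. Qed.

Lemma Q_ht x y : clt p x y -> hlt lt (ht x) (ht y).
Proof. apply Hp. Qed.

Lemma Q_meets x y : In x (cu p) -> In y (cu p) -> x <> y ->
  exists m, In m (cu p) /\ meet (clt p) x y m.
Proof. apply Hp. Qed.

Lemma Q_dom x y :
  (exists n, cc p x y = Some n) <-> limit_pair lt (fun x => In x (cu p)) (fun y => In y (cv p)) x y.
Proof. apply Hp. Qed.

Lemma Q_coloring : coloring_ok lt (clt p) tlt (fun x y n => cc p x y = Some n).
Proof. apply Hp. Qed.

Lemma Q_coloured_u x y n : cc p x y = Some n -> In x (cu p).
Proof. intro E. destruct (proj1 (Q_dom x y) (ex_intro _ n E)) as [d [_ [h _]]]. exact h. Qed.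

Lemma Q_coloured_v x y n : cc p x y = Some n -> In y (cv p).
Proof. intro E. destruct (proj1 (Q_dom x y) (ex_intro _ n E)) as [d [_ [_ [h _]]]]. exact h. Qed.

Lemma Q_colours_bounded : exists N, forall x y n, cc p x y = Some n -> n < N.
Proof.
  destruct (bounded_on_list (list_prod (cu p) (cv p))
              (fun xy => match cc p (fst xy) (snd xy) with Some n => n | None => 0 end)) as [N HN].
  exists N. intros x y n E.
  specialize (HN (x, y) (in_prod _ _ _ _ (Q_coloured_u E) (Q_coloured_v E))).
  simpl in HN. rewrite E in HN. exact HN.
Qed.

End Projections.

Section Extensions.
Variables p q : @cond W.
Hypothesis Hpq : Qle p q.

Lemma Qle_cu x : In x (cu p) -> In x (cu q).
Proof. apply Hpq. Qed.

Lemma Qle_clt x y : clt p x y -> clt q x y.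
Proof. apply Hpq. Qed.

Lemma Qle_cc x y n : cc p x y = Some n -> cc q x y = Some n.
Proof. apply Hpq. Qed.

Lemma Qle_meet x y m : In x (cu p) -> In y (cu p) -> x <> y ->
  meet (clt p) x y m -> meet (clt q) x y m.
Proof. apply Hpq. Qed.

End Extensions.

Lemma Qle_refl (p : @cond W) : Qle p p.
Proof. split; [|split; [|split; [|split]]]; auto. Qed.

Lemma Qle_trans (p q r : @cond W) : Qle p q -> Qle q r -> Qle p r.
Proof.
  intros [a1 [a2 [a3 [a4 a5]]]] [b1 [b2 [b3 [b4 b5]]]].
  split; [|split; [|split; [|split]]]; auto.
Qed.

(* A condition may be enlarged by any finite tree extending its tree and its
   meets: the colouring is extended by giving each new pair a fresh colour. *)
Lemma extend_cond (p : @cond W) (u' v' : list (@Pt W)) (R' : @Pt W -> @Pt W -> Prop) :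
  inQ p ->
  (forall x, In x (cu p) -> In x u') ->
  (forall y, In y (cv p) -> In y v') ->
  (forall y, In y v' -> TS y) ->
  (forall y, In y v' -> exists b, In b u' /\ ht y = ht b) ->
  is_tree_order (fun x => In x u') R' ->
  (forall x y, R' x y -> hlt lt (ht x) (ht y)) ->
  (forall x y, In x u' -> In y u' -> x <> y -> exists m, In m u' /\ meet R' x y m) ->
  (forall x y, clt p x y -> R' x y) ->
  (forall x y, In x (cu p) -> In y (cu p) -> R' x y -> clt p x y) ->
  (forall x y m, In x (cu p) -> In y (cu p) -> x <> y -> meet (clt p) x y m -> meet R' x y m) ->
  exists q, inQ q /\ Qle p q /\ cu q = u' /\ cv q = v' /\ clt q = R'.
Proof.
  intros Hp Hu Hv HvT Hlev Htree Hht Hmeets Hext Hold Hmeet.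
  destruct (Q_colours_bounded Hp) as [N HN].
  destruct (injective_on_list (list_prod u' v')) as [g Hg].
  set (D := limit_pair lt (fun x => In x u') (fun y => In y v')).
  assert (HcD : forall x y n, cc p x y = Some n -> D x y).
  { intros x y n E. destruct (proj1 (Q_dom Hp x y) (ex_intro _ n E)) as [d [h1 [h2 [h3 h4]]]].
    exists d. split; [exact h1|split; [exact (Hu _ h2)|split; [exact (Hv _ h3)|exact h4]]]. }
  exists (Cond u' v' R' (recolour (cc p) D N g)). cbn [cu cv clt cc].
  split; [|split; [|split; [|split]]]; try reflexivity.
  - split; [exact (Hu _ (Q_root Hp))|split; [exact (Hv _ (Q_v_root Hp))|]].
    do 5 (split; [assumption|]).
    split; [intros x y; exact (recolour_dom N g HcD x y)|].
    apply recolour_ok; [|exact HN|].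
    + exact (coloring_ok_transfer (Q_coloring Hp) (@Q_coloured_u p Hp) Hold Hmeet).
    + intros x y x' y' [d [_ [Hx [Hy _]]]] [d' [_ [Hx' [Hy' _]]]].
      apply Hg; apply in_prod; assumption.
  - split; [exact Hu|split; [exact Hv|split; [exact Hext|split; [|exact Hmeet]]]].
    intros x y n. apply recolour_extends.
Qed.

End Conditions.

Section Density.
Context {W : Type} (lt : W -> W -> Prop) (Hw : is_omega1 lt)
  (TS : @Pt W -> Prop) (tlt : @Pt W -> @Pt W -> Prop).

Notation inQ := (inQ lt TS tlt).

Lemma insert_node (p : @cond W) (x z : @Pt W) :
  inQ p -> In x (cu p) -> ~ In z (cu p) -> (forall s, weak (clt p) s x -> ht s <> ht z) ->
  exists q, inQ q /\ Qle p q /\ In z (cu q) /\ (hlt lt (ht z) (ht x) -> clt q z x).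
Proof.
  intros Hp Hx Hz Hlev.
  pose proof (Q_tree Hp) as HR.
  destruct (@extend_cond _ lt TS tlt p (z :: cu p) (cv p) (insert_rel lt (clt p) x z) Hp)
    as [q [Hq [Hpq [Hu [_ Hlt]]]]].
  - intros s Hs. right. exact Hs.
  - intros y Hy. exact Hy.
  - exact (Q_v_in_T Hp).
  - intros y Hy. destruct (Q_v_level Hp Hy) as [b [Hb E]].
    exists b. split; [right; exact Hb|exact E].
  - exact (insert_tree_order Hw HR (Q_ht Hp) Hx Hz Hlev).
  - apply (insert_ht Hw (Q_ht Hp)).
  - apply (insert_meets Hw HR (Q_meets Hp) Hx Hz Hlev).
  - intros s t Hst. left. exact Hst.
  - apply (insert_rel_old Hz).
  - apply (insert_meet_old lt HR Hx Hz).
  - exists q. split; [exact Hq|split; [exact Hpq|split]].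
    + rewrite Hu. left. reflexivity.
    + intro Hzx. rewrite Hlt. exact (insert_below_x (clt p) Hzx).
Qed.

Lemma add_to_v (p : @cond W) (y : @Pt W) :
  inQ p -> TS y -> (exists b, In b (cu p) /\ ht y = ht b) ->
  exists q, inQ q /\ Qle p q /\ In y (cv q).
Proof.
  intros Hp Hy Hb.
  destruct (@extend_cond _ lt TS tlt p (cu p) (y :: cv p) (clt p) Hp)
    as [q [Hq [Hpq [_ [Hv _]]]]].
  - intros x Hx. exact Hx.
  - intros s Hs. right. exact Hs.
  - intros s [<-|Hs]; [exact Hy|exact (Q_v_in_T Hp Hs)].
  - intros s [<-|Hs]; [exact Hb|exact (Q_v_level Hp Hs)].
  - exact (Q_tree Hp).
  - exact (Q_ht Hp).
  - exact (Q_meets Hp).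
  - intros s t Hst. exact Hst.
  - intros s t _ _ Hst. exact Hst.
  - intros s t m _ _ _ Hm. exact Hm.
  - exists q. split; [exact Hq|split; [exact Hpq|rewrite Hv; left; reflexivity]].
Qed.

Lemma fresh_point (l : list (@Pt W)) (b : W) : exists k, ~ In (Some (b, k)) l.
Proof.
  destruct (bounded_on_list l (fun x => match x with Some (_, k) => k | None => 0 end)) as [N HN].
  exists N. intro H. specialize (HN _ H). simpl in HN. lia.
Qed.

Lemma extend_to_u (p : @cond W) (x : @Pt W) :
  inQ p -> exists q, inQ q /\ Qle p q /\ In x (cu q).
Proof.
  intro Hp. destruct (classic (In x (cu p))) as [Hx|Hx].
  { exists p. split; [exact Hp|split; [apply Qle_refl|exact Hx]]. }
  (* hang [x] directly above the root *)
  destruct (@insert_node p None x Hp (Q_root Hp) Hx) as [q [Hq [Hpq [Hxq _]]]].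
  - intros s Hs. rewrite (weak_below_root (Q_tree Hp) Hs).
    destruct x as [[a k]|]; [discriminate|exfalso; exact (Hx (Q_root Hp))].
  - exists q. auto.
Qed.

Lemma extend_to_pred (p : @cond W) (x : @Pt W) (b : W) :
  inQ p -> In x (cu p) -> hlt lt (Some b) (ht x) ->
  exists q, inQ q /\ Qle p q /\ exists y, clt q y x /\ ht y = Some b.
Proof.
  intros Hp Hx Hbx.
  destruct (classic (exists y, clt p y x /\ ht y = Some b)) as [Hy|Hy].
  { exists p. split; [exact Hp|split; [apply Qle_refl|exact Hy]]. }
  destruct (fresh_point (cu p) b) as [k Hk].
  destruct (@insert_node p x (Some (b, k)) Hp Hx Hk) as [q [Hq [Hpq [_ Hzx]]]].
  - intros s [<-|Hs] Hsb; simpl in Hsb.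
    + rewrite Hsb in Hbx. exact (hlt_irrefl Hw Hbx).
    + apply Hy. exists s. split; [exact Hs|exact Hsb].
  - exists q. split; [exact Hq|split; [exact Hpq|]].
    exists (Some (b, k)). split; [exact (Hzx Hbx)|reflexivity].
Qed.

Lemma extend_to_v (p : @cond W) (y : @Pt W) :
  inQ p -> TS y -> exists q, inQ q /\ Qle p q /\ In y (cv q).
Proof.
  intros Hp Hy. destruct (extend_to_u y Hp) as [q [Hq [Hpq Hyq]]].
  destruct (@add_to_v q y Hq Hy) as [r [Hr [Hqr Hyr]]]; [exists y; auto|].
  exists r. split; [exact Hr|split; [exact (Qle_trans Hpq Hqr)|exact Hyr]].
Qed.

(* [inl (x, b)]: [x] is in the tree and has its predecessor of height [b];
   [inr (x, y)]: [x] is in the tree and [y] (if in [T]) is in [v]. *)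
Definition requirement : Type := ((@Pt W * W) + (@Pt W * @Pt W))%type.

Definition meets_requirement (rho : requirement) (q : @cond W) : Prop :=
  match rho with
  | inl (x, b) => inQ q /\ In x (cu q) /\
      (hlt lt (Some b) (ht x) -> exists y, clt q y x /\ ht y = Some b)
  | inr (x, y) => inQ q /\ In x (cu q) /\ (TS y -> In y (cv q))
  end.

Lemma requirement_dense rho : Qdense lt TS tlt (meets_requirement rho).
Proof.
  destruct rho as [[x b]|[x y]]; (split; [intros p [Hp _]; exact Hp|]);
    intros p Hp; destruct (extend_to_u x Hp) as [q [Hq [Hpq Hxq]]].
  - destruct (classic (hlt lt (Some b) (ht x))) as [Hb|Hb].
    + destruct (extend_to_pred Hq Hxq Hb) as [r [Hr [Hqr Hy]]].
      exists r. split; [|exact (Qle_trans Hpq Hqr)].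
      split; [exact Hr|split; [exact (Qle_cu Hqr Hxq)|intros _; exact Hy]].
    + exists q. split; [|exact Hpq]. split; [exact Hq|split; [exact Hxq|contradiction]].
  - destruct (classic (TS y)) as [Hy|Hy].
    + destruct (extend_to_v Hq Hy) as [r [Hr [Hqr Hyr]]].
      exists r. split; [|exact (Qle_trans Hpq Hqr)].
      split; [exact Hr|split; [exact (Qle_cu Hqr Hxq)|intros _; exact Hyr]].
    + exists q. split; [|exact Hpq]. split; [exact Hq|split; [exact Hxq|contradiction]].
Qed.

Lemma embeds_requirement : @embeds W requirement.
Proof.
  pose proof (embeds_Pt Hw) as HPt.
  apply (embeds_sum Hw); apply (embeds_prod Hw); auto using embeds_W.
Qed.

End Density.

(** * The generic tree *)

Section Generic.
Context {W : Type} (lt : W -> W -> Prop) (Hw : is_omega1 lt)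
  (TS : @Pt W -> Prop) (tlt : @Pt W -> @Pt W -> Prop) (HT : inA lt TS tlt).
Variable G : @cond W -> Prop.
Hypothesis HG : Qfilter lt TS tlt G.
Hypothesis HGreq : forall rho, exists p, G p /\ meets_requirement lt TS tlt rho p.

Let Tu (x : @Pt W) : Prop := exists p, G p /\ In x (cu p).
Let Tlt (x y : @Pt W) : Prop := exists p, G p /\ clt p x y.
Let Tc (x y : @Pt W) (n : nat) : Prop := exists p, G p /\ cc p x y = Some n.

Lemma G_inQ p : G p -> inQ lt TS tlt p.
Proof. apply HG. Qed.

Lemma G_directed p q : G p -> G q -> exists r, G r /\ Qle p r /\ Qle q r.
Proof. apply HG. Qed.

Lemma Tu_full x : Tu x.
Proof. destruct (HGreq (inr (x, None))) as [p [Gp [_ [Hx _]]]]. exists p. auto. Qed.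

Lemma Tlt_above q x y : G q -> Tlt x y -> exists r, G r /\ Qle q r /\ clt r x y.
Proof.
  intros Gq [p [Gp Hxy]]. destruct (G_directed Gq Gp) as [r [Gr [Hqr Hpr]]].
  exists r. split; [exact Gr|split; [exact Hqr|exact (Qle_clt Hpr Hxy)]].
Qed.

Lemma weak_Tlt_above q x y : G q -> weak Tlt x y -> exists r, G r /\ Qle q r /\ weak (clt r) x y.
Proof.
  intros Gq [<-|Hxy].
  - exists q. split; [exact Gq|split; [apply Qle_refl|left; reflexivity]].
  - destruct (Tlt_above Gq Hxy) as [r [Gr [Hqr H]]].
    exists r. split; [exact Gr|split; [exact Hqr|right; exact H]].
Qed.

Lemma G_contains_both x y : exists r, G r /\ In x (cu r) /\ In y (cu r).
Proof.
  destruct (Tu_full x) as [p [Gp Hx]], (Tu_full y) as [q [Gq Hy]].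
  destruct (G_directed Gp Gq) as [r [Gr [Hpr Hqr]]].
  exists r. split; [exact Gr|split; [exact (Qle_cu Hpr Hx)|exact (Qle_cu Hqr Hy)]].
Qed.

(* Meets are never changed by extensions, so a meet in one condition of [G]
   is a meet in the generic tree. *)
Lemma meet_generic r x y m : G r -> In x (cu r) -> In y (cu r) -> x <> y ->
  meet (clt r) x y m -> meet Tlt x y m.
Proof.
  intros Gr Hx Hy Hxy Hm. pose proof Hm as [Hmx [Hmy _]].
  split; [|split].
  - destruct Hmx as [<-|h]; [left; reflexivity|right; exists r; auto].
  - destruct Hmy as [<-|h]; [left; reflexivity|right; exists r; auto].
  - intros z Hzx Hzy.
    destruct (weak_Tlt_above Gr Hzx) as [r1 [G1 [L1 H1]]].
    destruct (weak_Tlt_above G1 Hzy) as [r2 [G2 [L2 H2]]].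
    assert (L : Qle r r2) by exact (Qle_trans L1 L2).
    destruct (Qle_meet L Hx Hy Hxy Hm) as [_ [_ Hmax]].
    assert (H1' : weak (clt r2) z x)
      by (destruct H1 as [<-|h]; [left; reflexivity|right; exact (Qle_clt L2 h)]).
    destruct (Hmax z H1' H2) as [<-|h]; [left; reflexivity|right; exists r2; auto].
Qed.

Lemma not_Tlt_of_perp r a b : G r -> In a (cu r) -> In b (cu r) -> perp (clt r) a b -> ~ Tlt a b.
Proof.
  intros Gr Ha Hb [Hab [Nab Nba]] HT'.
  destruct (Tlt_above Gr HT') as [r' [Gr' [L h]]].
  destruct (Q_meets (G_inQ Gr) Ha Hb Hab) as [m [_ Hm]].
  destruct (Qle_meet L Ha Hb Hab Hm) as [_ [_ Hmax]].
  destruct Hm as [[<-|Hma] [Hmb _]].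
  - destruct Hmb as [E|Hmb]; [exact (Hab E)|exact (Nab Hmb)].
  - pose proof (Q_tree (G_inQ Gr')) as Tr'.
    destruct (Hmax a (or_introl eq_refl) (or_intror h)) as [<-|Ham].
    + exact (tree_irrefl (Q_tree (G_inQ Gr)) Hma).
    + exact (tree_irrefl Tr' (tree_trans Tr' Ham (Qle_clt L Hma))).
Qed.

Lemma perp_generic r a b : G r -> In a (cu r) -> In b (cu r) -> perp (clt r) a b -> perp Tlt a b.
Proof.
  intros Gr Ha Hb Hp. split; [apply Hp|split; [exact (not_Tlt_of_perp Gr Ha Hb Hp)|]].
  apply (not_Tlt_of_perp Gr Hb Ha). destruct Hp as [h1 [h2 h3]].
  split; [intros E; apply h1; symmetry; exact E|split; assumption].
Qed.

Lemma Tc_coloring : coloring_ok lt Tlt tlt Tc.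
Proof.
  intros x1 y1 x2 y2 n [p1 [G1 E1]] [p2 [G2 E2]] Hne.
  destruct (G_directed G1 G2) as [r [Gr [L1 L2]]].
  apply (Qle_cc L1) in E1. apply (Qle_cc L2) in E2. pose proof (G_inQ Gr) as Hr.
  destruct (Q_coloring Hr E1 E2 Hne) as [Hht [Hperp [Hy [m1 [m2 [M1 [M2 Hm]]]]]]].
  pose proof (Q_coloured_u Hr E1) as I1. pose proof (Q_coloured_u Hr E2) as I2.
  split; [exact Hht|split; [exact (perp_generic Gr I1 I2 Hperp)|split; [exact Hy|]]].
  exists m1, m2. split; [exact (meet_generic Gr I1 I2 (proj1 Hperp) M1)|split; assumption].
Qed.

Lemma Tlt_tree : is_tree_order Tu Tlt.
Proof.
  split; [|split; [|split; [|split; [|split]]]].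
  - intros x y _. split; apply Tu_full.
  - intros x [p [Gp h]]. exact (tree_irrefl (Q_tree (G_inQ Gp)) h).
  - intros x y z Hxy [q [Gq Hyz]]. destruct (Tlt_above Gq Hxy) as [r [Gr [L h]]].
    exists r. split; [exact Gr|exact (tree_trans (Q_tree (G_inQ Gr)) h (Qle_clt L Hyz))].
  - apply Tu_full.
  - intros x [p [Gp h]] Hn.
    exists p. split; [exact Gp|exact (tree_root_below (Q_tree (G_inQ Gp)) h Hn)].
  - intros x y z Hyx [q [Gq Hzx]]. destruct (Tlt_above Gq Hyx) as [r [Gr [L h]]].
    destruct (tree_pred_linear (Q_tree (G_inQ Gr)) h (Qle_clt L Hzx))
      as [E|[h'|h']]; [left; exact E|right; left|right; right]; exists r; auto.
Qed.

Lemma Tlt_ht x y : Tlt x y -> hlt lt (ht x) (ht y).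
Proof. intros [p [Gp h]]. exact (Q_ht (G_inQ Gp) h). Qed.

Lemma Tlt_levels x b : hlt lt (Some b) (ht x) -> exists y, Tlt y x /\ ht y = Some b.
Proof.
  intro Hb. destruct (HGreq (inl (x, b))) as [p [Gp [_ [_ H]]]].
  destruct (H Hb) as [y [h1 h2]]. exists y. split; [exists p; auto|exact h2].
Qed.

Lemma Tc_dom x y : (exists n, Tc x y n) <-> limit_pair lt Tu TS x y.
Proof.
  split.
  - intros [n [p [Gp E]]]. pose proof (G_inQ Gp) as Hp.
    destruct (proj1 (Q_dom Hp x y) (ex_intro _ n E)) as [d [h1 [h2 [h3 h4]]]].
    exists d. split; [exact h1|split; [exists p; auto|split; [exact (Q_v_in_T Hp h3)|exact h4]]].
  - intros [d [h1 [_ [h3 h4]]]].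
    destruct (HGreq (inr (x, y))) as [p [Gp [Hp [Hx Hy]]]].
    destruct (proj2 (Q_dom Hp x y)) as [n E].
    + exists d. split; [exact h1|split; [exact Hx|split; [exact (Hy h3)|exact h4]]].
    + exists n, p. auto.
Qed.

Lemma Tc_functional x y n m : Tc x y n -> Tc x y m -> n = m.
Proof.
  intros [p [Gp E1]] [q [Gq E2]]. destruct (G_directed Gp Gq) as [r [_ [L1 L2]]].
  apply (Qle_cc L1) in E1. apply (Qle_cc L2) in E2. congruence.
Qed.

Lemma Tlt_normal x y d : ht x = Some d -> ht y = Some d -> is_limit lt d ->
  x <> y -> ~ (forall z, Tlt z x <-> Tlt z y).
Proof.
  intros Hx Hy [[b0 Hb0] Hd] Hxy Hsame.
  destruct (G_contains_both x y) as [r [Gr [Ix Iy]]].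
  destruct (Q_meets (G_inQ Gr) Ix Iy Hxy) as [m [_ Mm]].
  pose proof (meet_generic Gr Ix Iy Hxy Mm) as [_ [_ Hmax]].
  assert (Hm : hlt lt (ht m) (Some d)).
  { destruct Mm as [[<-|h] [Hmy _]].
    - exfalso. destruct Hmy as [E|h]; [exact (Hxy E)|].
      pose proof (Q_ht (G_inQ Gr) h) as H. rewrite Hx, Hy in H. exact (hlt_irrefl Hw H).
    - rewrite <- Hx. exact (Q_ht (G_inQ Gr) h). }
  assert (Hb : exists b, hlt lt (ht m) (Some b) /\ lt b d).
  { destruct (ht m) as [c|]; [destruct (Hd c Hm) as [c' [h1 h2]]; exists c'; auto|].
    exists b0. split; [exact I|exact Hb0]. }
  destruct Hb as [b [Hmb Hbd]].
  destruct (@Tlt_levels x b) as [z [Hzx Hzb]]; [rewrite Hx; exact Hbd|].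
  destruct (Hmax z (or_intror Hzx) (or_intror (proj1 (Hsame z) Hzx))) as [Ezm|Hzm].
  - subst m. rewrite Hzb in Hmb. exact (hlt_irrefl Hw Hmb).
  - pose proof (Tlt_ht Hzm) as H. rewrite Hzb in H. exact (hlt_irrefl Hw (hlt_trans Hw H Hmb)).
Qed.

Lemma uncountable_branch_colours B : is_branch Tu Tlt B -> ~ countable B ->
  forall d, is_limit lt d -> exists n z y, B z /\ ht z = Some d /\ Tc z y n.
Proof.
  intros HB NC d Hd.
  assert (Hhigh : exists x, B x /\ hlt lt (Some d) (ht x)).
  { apply NNPP; intro Hno. apply NC.
    apply (chain_countable_of_bounded Hw (proj1 HB) Tlt_ht (a := next Hw d)).
    intros [[c k]|] Bx; [|exact I]. simpl.
    destruct (lt_total Hw d c) as [h|[<-|h]].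
    - exfalso. apply Hno. exists (Some (c, k)). auto.
    - apply lt_next.
    - exact (lt_trans Hw h (lt_next Hw d)). }
  destruct Hhigh as [x [Bx Hdx]].
  destruct (Tlt_levels Hdx) as [z [Hzx Hzd]].
  destruct HT as (_ & _ & _ & Hheight & _). destruct (Hheight d) as [k Hk].
  destruct (proj2 (Tc_dom z (Some (d, k)))) as [n Hn].
  - exists d.
    split; [exact Hd|split; [apply Tu_full|split; [exact Hk|split; [exact Hzd|reflexivity]]]].
  - exists n, z, (Some (d, k)). split; [exact (branch_down_closed Tlt_tree HB Bx Hzx)|auto].
Qed.

(* Distinct limit levels of a branch would get distinct colours, but there are
   uncountably many limit levels. *)
Lemma Tlt_branch_countable B : is_branch Tu Tlt B -> countable B.
Proof.
  intro HB. apply NNPP; intro NC.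
  pose proof (uncountable_branch_colours HB NC) as Hcol.
  apply (limits_uncountable Hw).
  set (colour d := epsilon (inhabits 0) (fun n => exists z y, B z /\ ht z = Some d /\ Tc z y n)).
  exists colour. intros d1 d2 L1 L2 E.
  destruct (epsilon_spec (inhabits 0) _ (Hcol d1 L1)) as [z1 [y1 [B1 [H1 C1]]]].
  destruct (epsilon_spec (inhabits 0) _ (Hcol d2 L2)) as [z2 [y2 [B2 [H2 C2]]]].
  fold (colour d1) in C1. fold (colour d2) in C2. rewrite E in C1.
  apply NNPP; intro Hd.
  assert (Hz : (z1, y1) <> (z2, y2)) by (intros [= <- _]; apply Hd; congruence).
  destruct (Tc_coloring C1 C2 Hz) as [_ [[Hne [N12 N21]] _]].
  destruct (proj2 (proj1 HB) z1 z2 B1 B2) as [E'|[h|h]]; contradiction.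
Qed.

Lemma generic_in_A2sp : inA2sp lt Tu Tlt TS tlt Tc.
Proof.
  split; [|split; [exact HT|split; [exact Tc_dom|split; [exact Tc_functional|exact Tc_coloring]]]].
  split; [exact Tlt_tree|split; [intros x y _ Hyx; exact (Tlt_ht Hyx)|]].
  split; [intros a n b _ Hb; exact (@Tlt_levels (Some (a, n)) b Hb)|].
  split; [intro a; exists 0; apply Tu_full|].
  split; [exact Tlt_branch_countable|].
  intros x y d _ _. exact (@Tlt_normal x y d).
Qed.

End Generic.

Theorem lemma4p3 (W : Type) (lt : W -> W -> Prop) (Hw : is_omega1 lt)
  (TS : @Pt W -> Prop) (tlt : @Pt W -> @Pt W -> Prop) (HT : inA lt TS tlt) :
  exists F : W -> @cond W -> Prop,
    (forall i, Qdense lt TS tlt (F i)) /\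
    forall G : @cond W -> Prop,
      Qfilter lt TS tlt G ->
      (forall i, exists p, G p /\ F i p) ->
      inA2sp lt
        (fun x => exists p, G p /\ In x (cu p))
        (fun x y => exists p, G p /\ clt p x y)
        TS tlt
        (fun x y n => exists p, G p /\ cc p x y = Some n).
Proof.
  destruct (embeds_requirement Hw) as [code Hcode].
  set (decode i := epsilon (inhabits (inr (None, None) : @requirement W))
                     (fun rho => code rho = i)).
  assert (Hdecode : forall rho, decode (code rho) = rho).
  { intro rho. apply Hcode.
    exact (epsilon_spec _ (fun r => code r = code rho) (ex_intro _ rho eq_refl)). }
  exists (fun i => meets_requirement lt TS tlt (decode i)). split.
  - intro i. apply (requirement_dense Hw).
  - intros G HG HGF. apply (generic_in_A2sp Hw HT HG).
    intro rho. rewrite <- (Hdecode rho). apply HGF.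
Qed.
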